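(* Consider a splitting method in which, at every time $t$, the splitting step is carried out by a conditionally independent resampling scheme (as defined in the context). If, with probability one, $\sum_{i=1}^{N_t}w_t^i=1$ for all $t\ge0$, then the splitting method is a weighted ensemble method for a suitable choice of bins (namely, at each step, the children of parents in the same bin all receive the same weight, each bin produces a fixed number of children, and the method satisfies the definition of a weighted ensemble method given in the context).
   Context: Splitting method: Let $K$ be a Markov transition kernel on a measurable state space $X$ and $\mu_0$ a probability distribution on $X$. A splitting method produces, for $t=0,1,2,\dots$, particles $\xi_t^1,\dots,\xi_t^{N_t}\in X$ with weights $w_t^1,\dots,w_t^{N_t}\ge 0$, together with a filtration $\mathcal F_0\subseteq\hat{\mathcal F}_0\subseteq\mathcal F_1\subseteq\hat{\mathcal F}_1\subseteq\cdots$, as follows. Initially $\xi_0^1,\dots,\xi_0^{N_0}$ are i.i.d. with law $\mu_0$ and $w_0^i=1/N_0$. At each time $t\ge 0$: (Splitting step) for each $i$ a number $C_t^i>0$ is chosen, where $(\xi_t^i,w_t^i,C_t^i)_{1\le i\le N_t}$ is $\mathcal F_t$-measurable; random nonnegative integers $N_t^i$ are drawn with $\mathbb E[N_t^i\mid\mathcal F_t]=C_t^i$; each $\xi_t^i$ is replaced by $N_t^i$ copies, each with weight $w_t^i/C_t^i$; the resulting children are listed as $(\hat\xi_t^j,\hat w_t^j)_{1\le j\le N_{t+1}}$ with $N_{t+1}=\sum_i N_t^i$, and they are $\hat{\mathcal F}_t$-measurable. (Evolution step) conditional on $\hat{\mathcal F}_t$, the particles $\xi_{t+1}^1,\dots,\xi_{t+1}^{N_{t+1}}$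 are independent with $\xi_{t+1}^j\sim K(\hat\xi_t^j,\cdot)$, and $w_{t+1}^j=\hat w_t^j$. Conditionally independent resampling: given the parents $\xi_t^1,\dots,\xi_t^{N_t}$, their weights, and the numbers $C_t^k$, a matrix $P\in\mathbb R^{M\times N_t}$ with nonnegative entries and row sums at most $1$ is chosen ($M$ = maximal number of children), with $\sum_{j=1}^M P_{jk}=C_t^k$. Then, independently for $j=1,\dots,M$ (conditional on $P$ and the parent data): with probability $P_{jk}$ child $j$ is set to $\hat\xi_t^j=\xi_t^k$ with weight $\hat w_t^j=w_t^k/C_t^k$; with the remaining probability $1-\sum_k P_{jk}$ child $j$ is not assigned and $\hat w_t^j=0$. Children with zero weight are then removed. Weighted ensemble (WE) method: a splitting method in which at each time $t$ the splitting step is: the indices $1,\dots,N_t$ are partitioned ($\mathcal F_t$-measurably) into bins $u$, with $w_t(u)=\sum_{i\in u}w_t^i$; integers $N_t(u)\ge1$ are chosen ($\mathcal F_t$-measurably); for $i\in u$, $C_t^i=N_t(u)w_t^i/w_t(u)$; the $N_t^i$ satisfy $\mathbb E[N_t^i\mid\mathcal F_t]=C_t^i$ and $\sum_{i\in u}N_t^i=N_t(u)$ almost surely; and every child of a parent in bin $u$ receives weight $w_t(u)/N_t(u)$. *)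

From HB Require Import structures.
From mathcomp Require Export all_boot all_order all_algebra.
From mathcomp Require Export reals.
Set Implicit Arguments.
Unset Strict Implicit.
Unset Printing Implicit Defensive.
Export Order.TTheory GRing.Theory Num.Theory.
Local Open Scope ring_scope.

(* One splitting step, conditional on F_t: the parent data are fixed.
   Parents are indexed by 'I_N, potential children by 'I_M.
   w k = weight of parent k, C k = the number C_t^k,
   P = the resampling matrix (entries P j k). *)

(* Outcome of the resampling: for each potential child j, either the
   parent it copies (Some k) or "not assigned" (None). *)
Definition outcome (M N : nat) := {ffun 'I_M -> option 'I_N}.

Definition child_prob (R : ringType) (M N : nat) (P : 'M[R]_(M, N))
    (j : 'I_M) (o : option 'I_N) : R :=
  match o with
  | Some k => P j k
  | None => 1 - \sum_(k < N) P j k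
  end.

(* the children are independent (conditionally on the parent data and P):
   the law of the whole outcome is the product law *)
Definition outcome_prob (R : comRingType) (M N : nat) (P : 'M[R]_(M, N))
    (a : outcome M N) : R :=
  \prod_(j < M) child_prob P j (a j).

Definition num_children (M N : nat) (a : outcome M N) (k : 'I_N) : nat :=
  #|[set j | a j == Some k]|.

Definition child_weight (R : fieldType) (M N : nat) (w C : 'I_N -> R)
    (a : outcome M N) (j : 'I_M) : R :=
  match a j with
  | Some k => w k / C k
  | None => 0
  end.

Definition cir_step (R : realFieldType) (M N : nat) (w C : 'I_N -> R)
    (P : 'M[R]_(M, N)) : Prop :=
  [/\ (forall k, 0 < w k),
      (forall k, 0 < C k),
      (forall j k, 0 <= P j k),
      (forall j, \sum_(k < N) P j k <= 1)
    & (forall k, \sum_(j < M) P j k = C k)].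

(* total weight w_t(u) of the bin with label u, bins being the fibres of bin *)
Definition bin_weight (R : ringType) (N : nat) (w : 'I_N -> R)
    (bin : 'I_N -> 'I_N) (u : 'I_N) : R :=
  \sum_(i < N | bin i == u) w i.

(* Fix the parent data (w, C) and the resampling matrix P.  Starting from an
   outcome of positive probability, re-drawing a single child j among its
   possible assignments keeps positive probability, and by hypothesis the
   total child weight stays 1.  Hence every option of positive probability for
   child j carries the same weight (option_weight_determined).  Two
   consequences: parents sharing a possible child give their children the same
   weight w/C (share_eq_of_common_child), and a child that may copy some parent
   is never left unassigned (row_sum_of_support).

   The bins are the level sets of the share k |-> w k / C k, each labelled by a
   canonical representative (fibre_rep).  The number of children of a bin is
   the number of potential children j that may copy a parent of the bin.  This
   count equals both the sum of the C's over the bin (bin_capacity) and the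
   realized number of children in every outcome of positive probability
   (bin_count); the weight identities of the weighted ensemble method follow
   by field arithmetic (mainTheorem3). *)

From mathcomp Require Import ring.
Set Implicit Arguments.
Unset Strict Implicit.
Unset Printing Implicit Defensive.
Local Open Scope ring_scope.

Section FibreRepresentative.
Variables (I : finType) (T : eqType) (f : I -> T).

Definition fibre_rep (k : I) : I := odflt k [pick i | f i == f k].

Lemma fibre_repE k : f (fibre_rep k) = f k.
Proof. by rewrite /fibre_rep; case: pickP => [i /eqP|]. Qed.

Lemma eq_fibre_rep i k : (fibre_rep i == fibre_rep k) = (f i == f k).
Proof.
apply/eqP/eqP => [e | e]; first by rewrite -fibre_repE e fibre_repE.
rewrite /fibre_rep (eq_pick (_ : _ =1 [pred x | f x == f k])) => [|x /=];
  last by rewrite e.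
by case: pickP => [//|none]; have := none i; rewrite /= e eqxx.
Qed.
End FibreRepresentative.

Lemma sum_card_preimage (J I : finType) (a : J -> option I) (Q : pred I) :
  (\sum_(i | Q i) #|[set j | a j == Some i]|)%N
  = #|[set j | if a j is Some i then Q i else false]|.
Proof.
under eq_bigr do rewrite -sum1dep_card.
rewrite -sum1dep_card.
rewrite (exchange_big_dep (fun j => if a j is Some i then Q i else false)) /=.
  apply: eq_bigr => j; case: (a j) => [i0|] // Qi0.
  rewrite (big_pred1 i0) // => i /=; rewrite -[Some i0 == Some i]/(i0 == i) eq_sym.
  by case: eqP => [->|]; rewrite ?Qi0 ?andbF.
by move=> i j Qi /eqP ->.
Qed.

Section ResamplingStep.
Variables (R : realFieldType) (M N : nat) (w C : 'I_N -> R) (P : 'M[R]_(M, N)).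
Hypothesis step : cir_step w C P.

Lemma entry_eq0 j k : ~~ (0 < P j k) -> P j k = 0.
Proof.
by case: step => _ _ P_ge0 _ _; rewrite lt0r P_ge0 andbT negbK => /eqP.
Qed.

Lemma child_prob_ge0 j o : 0 <= child_prob P j o.
Proof.
by case: step => _ _ P_ge0 row_le1 _; case: o => [k|] /=; rewrite ?subr_ge0.
Qed.

Lemma outcome_prob_gt0P (a : outcome M N) :
  reflect (forall j, 0 < child_prob P j (a j)) (0 < outcome_prob P a).
Proof.
apply: (iffP idP) => [pos j | all_pos]; last exact: prodr_gt0.
rewrite lt0r child_prob_ge0 andbT; apply: contraTneq pos => zero.
by rewrite /outcome_prob (bigD1 j) //= zero mul0r ltxx.
Qed.

Lemma child_has_option j : exists o, 0 < child_prob P j o.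
Proof.
case: (pickP (fun k => 0 < P j k)) => [k Pjk | none]; first by exists (Some k).
by exists None; rewrite /= big1 ?subr0 ?ltr01 // => k _; apply/entry_eq0/negbT.
Qed.

Definition supported_outcome : outcome M N :=
  [ffun j => xchoose (child_has_option j)].

Lemma supported_outcome_gt0 : 0 < outcome_prob P supported_outcome.
Proof.
apply/outcome_prob_gt0P => j; rewrite ffunE.
exact: (xchooseP (child_has_option j)).
Qed.

Definition reassign (a : outcome M N) j o : outcome M N :=
  [ffun j' => if j' == j then o else a j'].

Lemma reassign_gt0 (a : outcome M N) j o :
  0 < outcome_prob P a -> 0 < child_prob P j o ->
  0 < outcome_prob P (reassign a j o).
Proof.
move=> /outcome_prob_gt0P a_pos o_pos; apply/outcome_prob_gt0P => j'.
by rewrite ffunE; case: eqP => [->|].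
Qed.

Definition child_share k : R := w k / C k.

Definition option_weight (o : option 'I_N) : R :=
  if o is Some k then child_share k else 0.

Lemma child_weightE (a : outcome M N) j : child_weight w C a j = option_weight (a j).
Proof. by rewrite /child_weight; case: (a j). Qed.

Lemma sum_child_weight_reassign (a : outcome M N) j o :
  \sum_(j' < M) child_weight w C (reassign a j o) j'
  = option_weight o + \sum_(j' < M | j' != j) child_weight w C a j'.
Proof.
rewrite (bigD1 j) //= child_weightE ffunE eqxx; congr (_ + _).
by apply: eq_bigr => j' /negbTE ne; rewrite !child_weightE ffunE ne.
Qed.

Lemma child_share_gt0 k : 0 < child_share k.
Proof. by case: step => w_gt0 C_gt0 _ _ _; rewrite divr_gt0. Qed.

Definition bin : 'I_N -> 'I_N := fibre_rep child_share.

Lemma same_binE i k : (bin i == bin k) = (child_share i == child_share k).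
Proof. exact: eq_fibre_rep. Qed.

Definition bin_children (u : 'I_N) : {set 'I_M} :=
  [set j | [exists i, (bin i == u) && (0 < P j i)]].

Definition bin_size (u : 'I_N) : nat := #|bin_children u|.

(* Every bin has a child: C k > 0 forces some P j k > 0. *)
Lemma bin_size_gt0 k : (0 < bin_size (bin k))%N.
Proof.
case: step => _ C_gt0 _ _ col_sum.
have [j Pjk] : exists j, 0 < P j k.
  apply/existsP; apply: contraTT (C_gt0 k) => /existsPn none.
  by rewrite -col_sum big1 ?ltxx // => j _; apply/entry_eq0/none.
rewrite card_gt0; apply/set0Pn; exists j.
by rewrite inE; apply/existsP; exists k; rewrite eqxx.
Qed.

Hypothesis unit_mass : forall a : outcome M N, 0 < outcome_prob P a ->
  \sum_(j < M) child_weight w C a j = 1.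

(* Key step: all assignments of positive probability of a given child carry
   the same weight, since exchanging one for the other preserves total mass 1. *)
Lemma option_weight_determined j (o1 o2 : option 'I_N) :
  0 < child_prob P j o1 -> 0 < child_prob P j o2 ->
  option_weight o1 = option_weight o2.
Proof.
move=> o1_pos o2_pos.
pose rest := \sum_(j' < M | j' != j) child_weight w C supported_outcome j'.
have mass o : 0 < child_prob P j o -> option_weight o + rest = 1.
  move=> pos; rewrite -sum_child_weight_reassign; apply: unit_mass.
  exact: reassign_gt0 supported_outcome_gt0 pos.
by apply: (addIr rest); rewrite !mass.
Qed.

Lemma share_eq_of_common_child j k k' : 0 < P j k -> 0 < P j k' ->
  child_share k = child_share k'.
Proof. exact: (@option_weight_determined j (Some k) (Some k')). Qed.

(* A child that may copy some parent is always assigned: its row sums to 1,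
   for otherwise being unassigned (weight 0) would be possible. *)
Lemma row_sum_of_support j k : 0 < P j k -> \sum_(k' < N) P j k' = 1.
Proof.
case: step => _ _ _ row_le1 _ Pjk; apply/eqP; rewrite eq_le row_le1 /=.
rewrite leNgt; apply/negP => row_lt1.
have none_pos : 0 < child_prob P j None by rewrite /= subr_gt0.
have := @option_weight_determined j (Some k) None Pjk none_pos.
by move/eqP; rewrite /= gt_eqF ?child_share_gt0.
Qed.

Lemma same_bin_of_common_child j i k : 0 < P j i -> 0 < P j k -> bin i = bin k.
Proof.
by move=> Pji Pjk; apply/eqP; rewrite same_binE (share_eq_of_common_child Pji Pjk).
Qed.

Lemma bin_row_sum j i : 0 < P j i -> \sum_(k < N | bin k == bin i) P j k = 1.
Proof.
move=> Pji; rewrite -(row_sum_of_support Pji).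
rewrite [RHS](bigID (fun k => bin k == bin i)) /=.
rewrite [X in _ = _ + X]big1 ?addr0 // => k out; apply: entry_eq0.
by apply: contra out => Pjk; rewrite (same_bin_of_common_child Pjk Pji).
Qed.

Lemma bin_capacity k : \sum_(i < N | bin i == bin k) C i = (bin_size (bin k))%:R.
Proof.
case: step => _ _ _ _ col_sum.
under eq_bigr do rewrite -col_sum.
rewrite exchange_big /= /bin_size -sum1_card natr_sum.
rewrite [RHS]big_mkcond; apply: eq_bigr => j _; rewrite inE.
case: existsP => [[i /andP[/eqP <- Pji]] | none]; first exact: bin_row_sum.
rewrite big1 // => i in_bin; apply/entry_eq0/negP => Pji.
by apply: none; exists i; rewrite in_bin.
Qed.

Lemma bin_weightE k :
  bin_weight w bin (bin k) = child_share k * (bin_size (bin k))%:R.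
Proof.
case: step => _ C_gt0 _ _ _.
rewrite /bin_weight -bin_capacity mulr_sumr; apply: eq_bigr => i.
by rewrite same_binE => /eqP <-; rewrite divfK // gt_eqF.
Qed.

Lemma bin_count (a : outcome M N) k : 0 < outcome_prob P a ->
  (\sum_(i < N | bin i == bin k) num_children a i)%N = bin_size (bin k).
Proof.
move=> /outcome_prob_gt0P a_pos; rewrite /num_children sum_card_preimage.
apply: eq_card => j; rewrite !inE; have := a_pos j; case: (a j) => [i0|] /= prob.
  apply/idP/existsP => [in_bin | [i /andP[/eqP <- Pji]]].
    by exists i0; rewrite in_bin.
  by rewrite (same_bin_of_common_child prob Pji).
apply/esym/existsP => [[i /andP[_ Pji]]].
by move: prob; rewrite (row_sum_of_support Pji) subrr ltxx.
Qed.
End ResamplingStep.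

Theorem mainTheorem3 (R : realType) (M N : nat) (w C : 'I_N -> R)
    (P : 'M[R]_(M, N)) :
  cir_step w C P ->
  \sum_(k < N) w k = 1 ->
  (forall a : outcome M N, 0 < outcome_prob P a ->
     \sum_(j < M) child_weight w C a j = 1) ->
  exists (bin : 'I_N -> 'I_N) (Nb : 'I_N -> nat),
    [/\ (forall k, (0 < Nb (bin k))%N),
        (forall k, C k = (Nb (bin k))%:R * w k / bin_weight w bin (bin k)),
        (forall k, w k / C k = bin_weight w bin (bin k) / (Nb (bin k))%:R)
      & (forall a : outcome M N, 0 < outcome_prob P a ->
           forall k, (\sum_(i < N | bin i == bin k) num_children a i)%N
                     = Nb (bin k))].
Proof.
move=> step _ unit_mass; exists (bin w C), (bin_size w C P).
have size_neq0 k : (bin_size w C P (bin w C k))%:R != 0 :> R.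
  by rewrite pnatr_eq0 -lt0n (bin_size_gt0 step).
split => [k | k | k | a a_pos k].
- exact: (bin_size_gt0 step).
- have [w_gt0 C_gt0 _ _ _] := step.
  rewrite (bin_weightE step unit_mass) /child_share.
  by field; rewrite size_neq0 !gt_eqF.
- by rewrite (bin_weightE step unit_mass) mulfK.
- exact: bin_count step unit_mass a k a_pos.
Qed.
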